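(* Let $M,N,p,r\ge1$. If at least one of $i$, $a$, $b$ has all its entries equal, then $(E_x)$ holds for all $x$. The normalized number of such triples, $$\alpha_p^r(M,N)=\frac{1}{M^{p+r}N^p}\#\{(i,a,b):\ i\text{ or }a\text{ or }b\text{ is constant}\},$$ equals $1-\frac{(M^p-M)(M^r-M)(N^p-N)}{M^{p+r}N^p}$, and $\alpha_p^r(M,N)=d_p^r(M,N)$ whenever $M=1$, or $N=1$, or $r=1$, or $p\le 2$.
   Context: For integers $M,N,p,r\ge1$, consider triples $(i,a,b)$ with $i=(i_1,\dots,i_r)\in\mathbb Z_M^r$, $a=(a_1,\dots,a_p)\in\mathbb Z_M^p$, $b=(b_1,\dots,b_p)\in\mathbb Z_N^p$, with cyclic conventions $i_{r+1}=i_1$, $b_{p+1}=b_1$. For $x\in\{1,\dots,r\}$, condition $(E_x)$ says that the multisets $\{(i_x+a_y,b_y),(i_{x+1}+a_y,b_{y+1}):y=1,\dots,p\}$ and $\{(i_x+a_y,b_{y+1}),(i_{x+1}+a_y,b_y):y=1,\dots,p\}$ of elements of $\mathbb Z_M\times\mathbb Z_N$ (counted with multiplicity) coincide. Define $d_p^r(M,N)=\frac{1}{M^{p+r}N^p}\#\{(i,a,b):(E_x)\text{ holds for all }x\}$. A tuple is called constant if all its entries are equal. *)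

From HB Require Import structures.
From mathcomp Require Import all_boot all_order all_algebra.
Set Implicit Arguments. Unset Strict Implicit. Unset Printing Implicit Defensive.
Import Order.TTheory GRing.Theory Num.Theory.

(* Z_M is represented by 'I_M (M >= 1, so M = 1 is allowed); addition in Z_M
   is addition of representatives followed by reduction mod M.  Elements of
   Z_M x Z_N are represented as pairs (nat * 'I_N), the first component being
   the reduced representative in {0,..,M-1}. *)

Definition addZ (M : nat) (u v : 'I_M) : nat := (u + v) %% M.

Definition triple (M N p r : nat) : finType :=
  ({ffun 'I_r -> 'I_M} * {ffun 'I_p -> 'I_M} * {ffun 'I_p -> 'I_N})%type.

(* The cyclic successor x+1 (with r+1 = 1) is ordS. *)
Definition multiset_lhs M N p r (i : {ffun 'I_r -> 'I_M}) (a : {ffun 'I_p -> 'I_M})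
  (b : {ffun 'I_p -> 'I_N}) (x : 'I_r) : seq (nat * 'I_N) :=
  flatten [seq [:: (addZ (i x) (a y), b y); (addZ (i (ordS x)) (a y), b (ordS y))]
          | y <- enum 'I_p].

Definition multiset_rhs M N p r (i : {ffun 'I_r -> 'I_M}) (a : {ffun 'I_p -> 'I_M})
  (b : {ffun 'I_p -> 'I_N}) (x : 'I_r) : seq (nat * 'I_N) :=
  flatten [seq [:: (addZ (i x) (a y), b (ordS y)); (addZ (i (ordS x)) (a y), b y)]
          | y <- enum 'I_p].

Definition cond_E M N p r i a b (x : 'I_r) : bool :=
  perm_eq (@multiset_lhs M N p r i a b x) (@multiset_rhs M N p r i a b x).

Definition all_E M N p r (t : triple M N p r) : bool :=
  [forall x : 'I_r, cond_E t.1.1 t.1.2 t.2 x].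

Definition constant_tuple (n : nat) (T : finType) (f : {ffun 'I_n -> T}) : bool :=
  [forall j : 'I_n, forall k : 'I_n, f j == f k].

Definition some_constant M N p r (t : triple M N p r) : bool :=
  [|| constant_tuple t.1.1, constant_tuple t.1.2 | constant_tuple t.2].

Local Open Scope ring_scope.

Definition d_pr (p r M N : nat) : rat :=
  (#|[set t : triple M N p r | all_E t]|)%:R / (M ^ (p + r) * N ^ p)%N%:R.

Definition alpha_pr (p r M N : nat) : rat :=
  (#|[set t : triple M N p r | some_constant t]|)%:R / (M ^ (p + r) * N ^ p)%N%:R.

From HB Require Import structures.
From mathcomp Require Import all_boot all_order all_algebra.
Import Order.TTheory GRing.Theory Num.Theory.

(* If i is constant, the two multisets of (E_x) agree term by term; if a or b
   is constant, reindexing y -> y + 1 turns one into the other.  Counting by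
   complement, the triples with no constant coordinate form a product of three
   sets of non-constant tuples, which gives the formula for alpha.  Conversely,
   for M = 1, N = 1, r = 1 or p = 1 some coordinate is constant for trivial
   reasons, and for p = 2 with a and b non-constant the element
   (i_x + a_1, b_1) of the left multiset can only match (i_(x+1) + a_1, b_1) on
   the right, so i_(x+1) = i_x for every x and i is constant. *)

Lemma constant_tupleP n (T : finType) (f : {ffun 'I_n -> T}) :
  reflect (forall j k, f j = f k) (constant_tuple f).
Proof.
apply: (iffP forallP) => [fC j k | fC j]; first by apply/eqP; move/forallP: (fC j).
by apply/forallP => k; rewrite (fC j k).
Qed.

Lemma val_iter_ordS n (x : 'I_n) k : val (iter k (@ordS n) x) = (x + k) %% n.
Proof.
elim: k => [|k IHk] /=; first by rewrite addn0 modn_small.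
by rewrite IHk -[((x + k) %% n).+1]addn1 modnDml -addnA addn1.
Qed.

Lemma constant_tuple_ordS n (T : finType) (f : {ffun 'I_n -> T}) :
  (forall x, f (ordS x) = f x) -> constant_tuple f.
Proof.
move=> fS; have f_iter k x : f (iter k (@ordS n) x) = f x.
  by elim: k => //= k IHk; rewrite fS.
apply/constant_tupleP => x y; rewrite -(f_iter (y + (n - x))%N x).
congr (f _); apply: val_inj; rewrite val_iter_ordS addnCA subnKC 1?ltnW //.
by rewrite modnDr modn_small.
Qed.

Lemma constant_tuple_dom1 (T : finType) (f : {ffun 'I_1 -> T}) :
  constant_tuple f.
Proof. by apply/constant_tupleP => j k; rewrite (ord1 j) (ord1 k). Qed.

Lemma constant_tuple_codom1 n (f : {ffun 'I_n -> 'I_1}) : constant_tuple f.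
Proof. by apply/constant_tupleP => j k; rewrite (ord1 (f j)) (ord1 (f k)). Qed.

Lemma ord2P (y : 'I_2) : y = ord0 \/ y = ord_max.
Proof. by case: y => [[|[|//]] ?]; [left | right]; apply: val_inj. Qed.

Lemma constant_tuple_dom2 (T : finType) (f : {ffun 'I_2 -> T}) :
  f ord0 = f ord_max -> constant_tuple f.
Proof.
by move=> f01; apply/constant_tupleP => j k; case: (ord2P j) (ord2P k) => -> [] ->.
Qed.

Lemma addZI M (u : 'I_M) : injective (addZ u).
Proof.
by move=> v w /eqP; rewrite /addZ eqn_modDl !modn_small // => /eqP/val_inj.
Qed.

Lemma addIZ M (v : 'I_M) : injective (@addZ M ^~ v).
Proof.
by move=> u w /eqP; rewrite /addZ eqn_modDr !modn_small // => /eqP/val_inj.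
Qed.

Lemma count_flatten_pairs (T : eqType) n (P : pred T) (u v : 'I_n -> T) :
  count P (flatten [seq [:: u y; v y] | y <- enum 'I_n])
  = (\sum_(y < n) (P (u y) + P (v y)))%N.
Proof.
rewrite count_flatten sumnE !big_map -enumT big_enum /=.
by apply: eq_bigr => y _; rewrite addn0.
Qed.

Lemma sum_ordS n (F : 'I_n -> nat) : (\sum_(y < n) F (ordS y) = \sum_(y < n) F y)%N.
Proof. by rewrite [RHS](reindex_inj (@ordS_inj n)). Qed.

Lemma cond_E_count M N p r i a b x :
  @cond_E M N p r i a b x <->
  forall P : pred (nat * 'I_N),
    (\sum_(y < p) (P (addZ (i x) (a y), b y)
                   + P (addZ (i (ordS x)) (a y), b (ordS y))))%N
  = (\sum_(y < p) (P (addZ (i x) (a y), b (ordS y))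
                   + P (addZ (i (ordS x)) (a y), b y)))%N.
Proof.
rewrite /cond_E /multiset_lhs /multiset_rhs; split => [/permP eqPQ P | eqPQ].
  by have := eqPQ P; rewrite !count_flatten_pairs.
by apply/permP => P; rewrite !count_flatten_pairs; apply: eqPQ.
Qed.

Lemma some_constant_all_E M N p r (t : triple M N p r) :
  some_constant t -> all_E t.
Proof.
case: t => [[i a] b]; rewrite /some_constant /all_E /=.
case/or3P => /constant_tupleP fC; apply/forallP => x; apply/cond_E_count => P.
- by apply: eq_bigr => y _; rewrite (fC (ordS x) x) addnC.
- rewrite !big_split /=; congr (_ + _).
    rewrite -(sum_ordS _ (fun y => P (addZ (i x) (a y), b y))).
    by apply: eq_bigr => y _; rewrite (fC (ordS y) y).
  rewrite -(sum_ordS _ (fun y => P (addZ (i (ordS x)) (a y), b y))).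
  by apply: eq_bigr => y _; rewrite (fC (ordS y) y).
- by apply: eq_bigr => y _; rewrite (fC (ordS y) y) addnC.
Qed.

Lemma cond_E2_ordS M N r i (a : {ffun 'I_2 -> 'I_M}) (b : {ffun 'I_2 -> 'I_N})
    (x : 'I_r) :
  a ord0 != a ord_max -> b ord0 != b ord_max -> cond_E i a b x ->
  i (ordS x) = i x.
Proof.
move=> a01 b01 /perm_mem eq_lr.
have : (addZ (i x) (a ord0), b ord0) \in multiset_rhs i a b x.
  by rewrite -eq_lr; apply/flatten_mapP; exists ord0; rewrite ?mem_enum ?inE ?eqxx.
have ordS0 : ordS (ord0 : 'I_2) = ord_max by apply: val_inj.
have ordS1 : ordS (ord_max : 'I_2) = ord0 by apply: val_inj.
case/flatten_mapP => y _; case: (ord2P y) => ->; rewrite ?ordS0 ?ordS1 !inE !xpair_eqE.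
all: case/orP => /andP [/eqP eq_i /eqP eq_b].
all: first [ by move/addIZ: eq_i -> | by move/addZI: eq_i a01 ->; rewrite eqxx
            | by move: b01; rewrite eq_b eqxx | by move: b01; rewrite -eq_b eqxx ].
Qed.

Lemma all_E_some_constant M N p r (t : triple M N p r) : (0 < p)%N ->
  [\/ M = 1%N, N = 1%N, r = 1%N | (p <= 2)%N] -> all_E t -> some_constant t.
Proof.
case: t => [[i a] b]; rewrite /some_constant /all_E /= => p_gt0.
case=> [M1 | N1 | r1 | p_le2] allE; apply/or3P.
- by subst M; apply: Or31; apply: constant_tuple_codom1.
- by subst N; apply: Or33; apply: constant_tuple_codom1.
- by subst r; apply: Or31; apply: constant_tuple_dom1.
move: a b allE; case: p p_gt0 p_le2 => [|[|[|//]]] // _ _ a b allE.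
  by apply: Or32; apply: constant_tuple_dom1.
have [b01 | b01] := eqVneq (b ord0) (b ord_max).
  by apply: Or33; apply: constant_tuple_dom2.
have [a01 | a01] := eqVneq (a ord0) (a ord_max).
  by apply: Or32; apply: constant_tuple_dom2.
apply: Or31; apply: constant_tuple_ordS => x.
by apply: cond_E2_ordS a01 b01 _; move/forallP: allE.
Qed.

Lemma card_constant_tuple n (T : finType) : (0 < n)%N ->
  #|[set f : {ffun 'I_n -> T} | constant_tuple f]| = #|T|.
Proof.
move=> n_gt0; pose j0 := Ordinal n_gt0.
have -> : [set f : {ffun 'I_n -> T} | constant_tuple f] =
          (fun c : T => [ffun=> c]) @: [set: T].
  apply/setP => f; rewrite inE; apply/constant_tupleP/imsetP => [fC | [c _ ->]].
    by exists (f j0); rewrite ?inE //; apply/ffunP => j; rewrite ffunE (fC j j0).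
  by move=> j k; rewrite !ffunE.
by rewrite card_imset ?cardsT // => c d /ffunP /(_ j0); rewrite !ffunE.
Qed.

Lemma card_nonconstant_tuple n (T : finType) : (0 < n)%N ->
  #|~: [set f : {ffun 'I_n -> T} | constant_tuple f]| = (#|T| ^ n - #|T|)%N.
Proof.
move=> n_gt0; have := cardsC [set f : {ffun 'I_n -> T} | constant_tuple f].
by rewrite card_constant_tuple // card_ffun card_ord => <-; rewrite addKn.
Qed.

Lemma card_some_constant M N p r : (0 < p)%N -> (0 < r)%N ->
  #|[set t : triple M N p r | some_constant t]| =
  (M ^ r * M ^ p * N ^ p - (M ^ r - M) * (M ^ p - M) * (N ^ p - N))%N.
Proof.
move=> p_gt0 r_gt0.
set C := fun n (T : finType) => [set f : {ffun 'I_n -> T} | constant_tuple f].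
have -> : [set t : triple M N p r | some_constant t] =
          ~: setX (setX (~: C r 'I_M) (~: C p 'I_M)) (~: C p 'I_N).
  apply/setP => [[[i a] b]]; rewrite !inE /some_constant /=.
  by case: (constant_tuple i) (constant_tuple a) (constant_tuple b) => [] [] [].
rewrite cardsCs setCK !cardsX !card_nonconstant_tuple // !card_ord.
by rewrite /triple !card_prod !card_ffun !card_ord.
Qed.

Local Open Scope ring_scope.

Lemma alpha_prE M N p r : (0 < M)%N -> (0 < N)%N -> (0 < p)%N -> (0 < r)%N ->
  alpha_pr p r M N =
    1 - ((M%:R ^+ p - M%:R) * (M%:R ^+ r - M%:R) * (N%:R ^+ p - N%:R))
          / (M%:R ^+ (p + r) * N%:R ^+ p).
Proof.
move=> M_gt0 N_gt0 p_gt0 r_gt0.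
have le_expn K k : (0 < K)%N -> (0 < k)%N -> (K <= K ^ k)%N.
  by move=> K_gt0 k_gt0; rewrite -{1}(expn1 K) leq_pexp2l.
rewrite /alpha_pr card_some_constant // natrB; last by rewrite !leq_mul ?leq_subr.
rewrite !natrM !natrB ?le_expn // !natrX exprD.
have denom_neq0 : (M%:R ^+ p * M%:R ^+ r * N%:R ^+ p : rat) != 0.
  by rewrite !mulf_neq0 // expf_neq0 // pnatr_eq0 -lt0n.
rewrite mulrBl [_ ^+ r * _ ^+ p]mulrC divff //; congr (_ - _ / _).
by rewrite [(_ - _) * (_ - _)]mulrC.
Qed.

Theorem proposition3p3 (M N p r : nat) :
  (0 < M)%N -> (0 < N)%N -> (0 < p)%N -> (0 < r)%N ->
  [/\ (forall t : triple M N p r, some_constant t -> all_E t),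
      alpha_pr p r M N =
        1 - ((M%:R ^+ p - M%:R) * (M%:R ^+ r - M%:R) * (N%:R ^+ p - N%:R))
              / (M%:R ^+ (p + r) * N%:R ^+ p)
    & [\/ M = 1%N, N = 1%N, r = 1%N | (p <= 2)%N] ->
        alpha_pr p r M N = d_pr p r M N].
Proof.
move=> M_gt0 N_gt0 p_gt0 r_gt0; split.
- exact: some_constant_all_E.
- exact: alpha_prE.
move=> small; rewrite /alpha_pr /d_pr; congr (_%:R / _); apply: eq_card => t.
rewrite !inE; apply/idP/idP; first exact: some_constant_all_E.
exact: all_E_some_constant.
Qed.
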